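(* Let $f$ be a formula with $m$ clauses over $n$ variables, each clause being a CNF, cardinality, XOR or NAE constraint, and let $F=\sum_c\mathrm{FE}_c$, a multilinear polynomial on $[-1,1]^n$ with values in $[-m,m]$. Run projected gradient descent with step size $\eta=\frac{1}{nm}$ from any starting point $x_0\in[-1,1]^n$: $$x_{t+1}=\Pi_{[-1,1]^n}\big(x_t-\eta\nabla F(x_t)\big)=x_t-\eta G(x_t).$$ Then within $O\big(\frac{nm^2}{\epsilon^2}\big)$ iterations it reaches an $\epsilon$-projected-critical point, i.e. an iterate $x_t$ with $\|G(x_t)\|_2<\epsilon$.
   Context: Boolean values are encoded as $\pm1$, with $-1$ standing for True. $\mathrm{FE}_c$ is the Fourier expansion of clause $c$, i.e. the unique multilinear polynomial agreeing with $c$ (as a $\{\pm1\}$-valued function) on $\{\pm1\}^n$. $\Pi_{[-1,1]^n}(y)=\arg\min_{x\in[-1,1]^n}\tfrac12\|x-y\|_2^2$ is the Euclidean projection onto the cube. The gradient mapping is $G(x)=\frac1\eta\big(x-\Pi_{[-1,1]^n}(x-\eta\nabla F(x))\big)$. *)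

From HB Require Import structures.
From mathcomp Require Import all_boot all_order all_algebra.
From mathcomp Require Import all_classical all_reals all_analysis.
Set Implicit Arguments. Unset Strict Implicit. Unset Printing Implicit Defensive.
Import Order.TTheory GRing.Theory Num.Theory.
Import numFieldNormedType.Exports.
Local Open Scope ring_scope.

Inductive ctype := CNF | Card of nat | XOR | NAE.

(* A literal is (variable, negated?). *)
Record clause (n : nat) := Clause { ctyp : ctype; lits : seq ('I_n * bool) }.

(* Boolean assignment: b i = true means variable i is True (encoded -1). *)
Definition lit_true n (b : {ffun 'I_n -> bool}) (l : 'I_n * bool) : bool :=
  b l.1 (+) l.2.

Definition clause_sat n (c : clause n) (b : {ffun 'I_n -> bool}) : bool :=
  let vs := map (lit_true b) (lits c) in
  match ctyp c with
  | CNF => has id vs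
  | Card k => (k <= count id vs)%N
  | XOR => odd (count id vs)
  | NAE => has id vs && has negb vs
  end.

Definition pm1 {R : realType} (t : bool) : R := if t then -1 else 1.

Definition clause_val {R : realType} n (c : clause n) (b : {ffun 'I_n -> bool}) : R :=
  pm1 (clause_sat c b).

(* Fourier expansion FE_c: the multilinear interpolation of c,
   sum over all points a of {+-1}^n of c(a) * prod_i (1 + a_i x_i)/2. *)
Definition FE {R : realType} n (c : clause n) (x : 'rV[R]_n) : R :=
  \sum_(b : {ffun 'I_n -> bool})
     clause_val c b * \prod_(i < n) ((1 + pm1 (b i) * x ord0 i) / 2).

Definition Fobj {R : realType} n (f : seq (clause n)) (x : 'rV[R]_n) : R :=
  \sum_(c <- f) FE c x.

Definition ebasis {R : realType} n (i : 'I_n) : 'rV[R]_n := \row_j (i == j)%:R.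

Definition grad {R : realType} n (F : 'rV[R]_n -> R) (x : 'rV[R]_n) : 'rV[R]_n :=
  \row_i ('D_(ebasis i) F x).

Definition in_cube {R : realType} n (x : 'rV[R]_n) : Prop :=
  forall i, -1 <= x ord0 i <= 1.

Definition sqnorm {R : realType} n (v : 'rV[R]_n) : R :=
  \sum_(i < n) (v ord0 i) ^+ 2.

Definition norm2 {R : realType} n (v : 'rV[R]_n) : R := Num.sqrt (sqnorm v).

Definition is_cube_proj {R : realType} n (y p : 'rV[R]_n) : Prop :=
  in_cube p /\
  forall q, in_cube q -> sqnorm (p - y) / 2 <= sqnorm (q - y) / 2.

(* gradient mapping G(x) = (x - Pi(x - eta grad F(x)))/eta, with the projection
   given relationally as p *)
Definition grad_map {R : realType} n (eta : R) (x p : 'rV[R]_n) : 'rV[R]_n :=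
  eta^-1 *: (x - p).

From HB Require Import structures.
From mathcomp Require Import all_boot all_order all_algebra.
From mathcomp Require Import all_classical all_reals all_analysis.
From mathcomp Require Import ring lra.
Import Order.TTheory GRing.Theory Num.Theory.
Local Open Scope ring_scope.

(* F is the multilinear interpolation of its values on the vertices of the cube,
   which lie in [-m, m].  Its i-th partial derivative is again such an
   interpolation (of sign-twisted values, with x_i frozen at 0), so on the cube it
   is bounded by m and m-Lipschitz in the l1 distance of the other coordinates.
   Moving from x to y one coordinate at a time, F is affine in the moving
   coordinate, and the accumulated error sum_i |d_i| sum_(j<i) |d_j| <= n/2 |d|^2
   yields the descent lemma F y <= F x + <grad F x, d> + nm/2 |d|^2.  Together with
   the variational inequality of the projection, every step with eta <= 1/(nm)
   decreases F by at least eta/2 |G|^2; as F varies by at most 2m, the sum of all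
   |G(x_t)|^2 is at most 4m/eta = 4nm^2, so one of the first 4nm^2/eps^2 + 1
   iterates has |G| < eps. *)

Section SumsOfSquares.
Set Implicit Arguments. Unset Strict Implicit.
Variables (R : realFieldType) (n : nat).
Implicit Types a : 'I_n -> R.

Lemma sqr_sum_lower_pairs a :
  (\sum_i a i) ^+ 2 = 2 * \sum_i a i * \sum_(j < n | (j < i)%N) a j + \sum_i a i ^+ 2.
Proof.
have split_row i : a i * \sum_j a j =
    a i * \sum_(j < n | (j < i)%N) a j + a i ^+ 2 + \sum_(j < n | (i < j)%N) a i * a j.
  rewrite (bigD1 i) //= (bigID (fun j : 'I_n => (j < i)%N)) /= mulr_sumr.
  rewrite mulrDr mulrDr -!mulr_sumr expr2.
  have [lower upper] : (forall j : 'I_n, (j != i) && (j < i)%N = (j < i)%N) /\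
                       (forall j : 'I_n, (j != i) && ~~ (j < i)%N = (i < j)%N).
    by split=> j; rewrite -val_eqE /=; case: ltngtP.
  rewrite (eq_bigl _ _ lower) (eq_bigl _ _ upper) mulr_sumr; ring.
have upper_eq_lower : \sum_(i < n) \sum_(j < n | (i < j)%N) a i * a j =
                      \sum_(i < n) a i * \sum_(j < n | (j < i)%N) a j.
  rewrite (exchange_big_dep predT) //=; apply: eq_bigr => j _.
  by rewrite mulr_sumr; apply: eq_bigr => i _; rewrite mulrC.
rewrite expr2 mulr_suml (eq_bigr _ (fun i _ => split_row i)) !big_split /=.
rewrite upper_eq_lower; ring.
Qed.

Lemma sqr_sum_le a : (\sum_i a i) ^+ 2 <= n%:R * \sum_i a i ^+ 2.
Proof.
have row_sum i : \sum_j (a i - a j) ^+ 2 =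
    n%:R * a i ^+ 2 + \sum_j a j ^+ 2 - 2 * (a i * \sum_j a j).
  rewrite (eq_bigr (fun j => a i ^+ 2 + a j ^+ 2 - 2 * (a i * a j))); last by move=> j _; ring.
  rewrite !big_split /= sumrN sumr_const card_ord -!mulr_sumr -mulr_natl; ring.
have : 0 <= \sum_i \sum_j (a i - a j) ^+ 2.
  by apply: sumr_ge0 => i _; apply: sumr_ge0 => j _; apply: sqr_ge0.
rewrite (eq_bigr _ (fun i _ => row_sum i)) !big_split /= sumrN sumr_const card_ord.
rewrite -!mulr_sumr -mulr_suml -mulr_natl expr2; lra.
Qed.

Lemma sum_mul_lower_le a :
  \sum_i a i * \sum_(j < n | (j < i)%N) a j <= n%:R / 2 * \sum_i a i ^+ 2.
Proof.
have := sqr_sum_le a; rewrite sqr_sum_lower_pairs.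
have : 0 <= \sum_i a i ^+ 2 by apply: sumr_ge0 => i _; apply: sqr_ge0.
lra.
Qed.

End SumsOfSquares.

Lemma ge0_of_ge0_perturbation (R : realFieldType) (A B : R) :
  0 <= B -> (forall s, 0 < s <= 1 -> 0 <= 2 * A + s * B) -> 0 <= A.
Proof.
move=> B_ge0 pert; rewrite leNgt; apply/negP => A_lt0.
have BA_gt0 : 0 < B - A by lra.
(* the perturbation [s = -A / (B - A)] makes [2 A + s B] negative *)
pose s := - A / (B - A).
have s_gt0 : 0 < s by rewrite divr_gt0 //; lra.
have s_le1 : s <= 1 by rewrite ler_pdivrMr // mul1r; lra.
have := pert s; rewrite s_gt0 s_le1 => /(_ isT).
have -> : 2 * A + s * B = (A * B - 2 * A ^+ 2) / (B - A) by rewrite /s; field; lra.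
rewrite pmulr_lge0 ?invr_gt0 //; nra.
Qed.

Section CubeProjection.
Set Implicit Arguments. Unset Strict Implicit.
Variables (R : realType) (n : nat).
Implicit Types y p q : 'rV[R]_n.

Lemma in_cube_segment p q s : in_cube p -> in_cube q -> 0 <= s <= 1 ->
  in_cube (p + s *: (q - p)).
Proof.
move=> p_cube q_cube /andP[s_ge0 s_le1] i; rewrite !mxE.
have /andP[? ?] := p_cube i; have /andP[? ?] := q_cube i.
have ? : 0 <= (1 - s) * (p ord0 i + 1) by apply: mulr_ge0; lra.
have ? : 0 <= s * (q ord0 i + 1) by apply: mulr_ge0; lra.
have ? : 0 <= (1 - s) * (1 - p ord0 i) by apply: mulr_ge0; lra.
have ? : 0 <= s * (1 - q ord0 i) by apply: mulr_ge0; lra.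
apply/andP; split; nra.
Qed.

Lemma cube_proj_variational y p q : is_cube_proj y p -> in_cube q ->
  0 <= \sum_i (p ord0 i - y ord0 i) * (q ord0 i - p ord0 i).
Proof.
case=> p_cube p_min q_cube.
apply: (@ge0_of_ge0_perturbation _ _ (\sum_i (q ord0 i - p ord0 i) ^+ 2)).
  by apply: sumr_ge0 => i _; apply: sqr_ge0.
move=> s /andP[s_gt0 s_le1].
have s_unit : 0 <= s <= 1 by rewrite ltW ?s_le1.
have := p_min _ (in_cube_segment p_cube q_cube s_unit).
rewrite ler_pM2r ?invr_gt0 // /sqnorm -subr_ge0 -sumrB.
rewrite (eq_bigr (fun i => s * (2 * ((p ord0 i - y ord0 i) * (q ord0 i - p ord0 i))
                           + s * (q ord0 i - p ord0 i) ^+ 2))); last first.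
  by move=> i _; rewrite !mxE; ring.
by rewrite -mulr_sumr pmulr_rge0 // big_split /= -!mulr_sumr.
Qed.
End CubeProjection.

Section Multilinear.
Set Implicit Arguments. Unset Strict Implicit.
Variables (R : realType) (n : nat).
Local Notation vertex := {ffun 'I_n -> bool}.
Implicit Types (a : vertex -> R) (x y : 'rV[R]_n) (i : 'I_n) (s M : R).

Definition lagr (v : bool) s : R := (1 + pm1 v * s) / 2.

Definition multilin a x : R := \sum_b a b * \prod_i lagr (b i) (x ord0 i).

Definition dcoef a i : vertex -> R := fun b => a b * pm1 (b i).

Definition row_set x i s : 'rV[R]_n := \row_j (if j == i then s else x ord0 j).

(* d/ds lagr v s = pm1 v / 2 = pm1 v * lagr v 0, so the derivative in x_i is the
   interpolation of [dcoef a i] at x with x_i set to 0. *)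
Definition dmultilin a i x : R := multilin (dcoef a i) (row_set x i 0).

Definition row_mix x y (k : nat) : 'rV[R]_n :=
  \row_j (if (j < k)%N then y ord0 j else x ord0 j).

Lemma lagr_ge0 v s : -1 <= s <= 1 -> 0 <= lagr v s.
Proof. by case: v; rewrite /lagr /pm1 => /andP[? ?]; lra. Qed.

Lemma sum_prod_lagr x : \sum_(b : vertex) \prod_i lagr (b i) (x ord0 i) = 1.
Proof.
rewrite -(bigA_distr_bigA (fun i v => lagr v (x ord0 i))) big1 // => i _.
by rewrite big_bool /lagr /pm1 /=; field.
Qed.

Lemma norm_multilin_le a M x :
  (forall b, `|a b| <= M) -> in_cube x -> `|multilin a x| <= M.
Proof.
move=> a_le x_cube; apply: le_trans (ler_norm_sum _ _ _) _.
rewrite -[M]mulr1 -[X in M * X](sum_prod_lagr x) mulr_sumr; apply: ler_sum => b _.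
have prod_ge0 : 0 <= \prod_i lagr (b i) (x ord0 i).
  by apply: prodr_ge0 => i _; apply: lagr_ge0.
by rewrite normrM (ger0_norm prod_ge0) ler_wpM2r.
Qed.

Lemma norm_dcoef_le a M i : (forall b, `|a b| <= M) -> forall b, `|dcoef a i b| <= M.
Proof. by move=> a_le b; rewrite normrM; case: (b i); rewrite /pm1 ?normrN normr1 mulr1. Qed.

Lemma row_set_id x i : row_set x i (x ord0 i) = x.
Proof. by apply/rowP => j; rewrite !mxE; case: eqP => // ->. Qed.

Lemma in_cube_row_set x i s : in_cube x -> -1 <= s <= 1 -> in_cube (row_set x i s).
Proof. by move=> x_cube s_unit j; rewrite !mxE; case: ifP. Qed.

Lemma multilin_row_setB a x i s (t : R) :
  multilin a (row_set x i s) - multilin a (row_set x i t) = (s - t) * dmultilin a i x.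
Proof.
have prod_row_set b u : \prod_j lagr (b j) (row_set x i u ord0 j) =
    (1 + pm1 (b i) * u) * \prod_j lagr (b j) (row_set x i 0 ord0 j).
  rewrite (bigD1 i) //= [in RHS](bigD1 i) //= !mxE eqxx mulrA; congr (_ * _).
    by rewrite /lagr; field.
  by apply: eq_bigr => j /negbTE ji; rewrite !mxE ji.
rewrite /dmultilin /multilin mulr_sumr -sumrB; apply: eq_bigr => b _.
rewrite (prod_row_set b s) (prod_row_set b t) /dcoef; ring.
Qed.

Lemma derive_multilin a x i : 'D_(ebasis i) (multilin a) x = dmultilin a i x.
Proof.
apply: lim_near_cst; first exact: norm_hausdorff.
exists 1; first exact: ltr01.
move=> h _ h_neq0 /=.
have -> : h *: ebasis i + x = row_set x i (x ord0 i + h).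
  apply/rowP => j; rewrite !mxE eq_sym; case: eqP => [->|_]; first by rewrite mulr1 addrC.
  by rewrite mulr0 add0r.
by rewrite -[in multilin a x](row_set_id x i) multilin_row_setB addrAC subrr add0r [_ *: _]mulKf.
Qed.

Lemma grad_multilin a x : grad (multilin a) x = \row_i dmultilin a i x.
Proof. by apply/rowP => i; rewrite !mxE derive_multilin. Qed.

Lemma norm_dmultilin_le a M i x :
  (forall b, `|a b| <= M) -> in_cube x -> `|dmultilin a i x| <= M.
Proof.
move=> a_le x_cube; apply: (norm_multilin_le (norm_dcoef_le i a_le)).
by apply: in_cube_row_set => //; lra.
Qed.

Lemma row_mix0 x y : row_mix x y 0 = x.
Proof. by apply/rowP => j; rewrite !mxE. Qed.

Lemma row_mixn x y : row_mix x y n = y.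
Proof. by apply/rowP => j; rewrite !mxE ltn_ord. Qed.

Lemma in_cube_row_mix x y k : in_cube x -> in_cube y -> in_cube (row_mix x y k).
Proof. by move=> x_cube y_cube j; rewrite !mxE; case: ifP. Qed.

Lemma multilin_row_mixS a x y i :
  multilin a (row_mix x y i.+1) - multilin a (row_mix x y i) =
  (y ord0 i - x ord0 i) * dmultilin a i (row_mix x y i).
Proof.
have -> : row_mix x y i.+1 = row_set (row_mix x y i) i (y ord0 i).
  apply/rowP => j; rewrite !mxE ltnS; case: eqVneq => [->|ji]; first by rewrite leqnn.
  by rewrite leq_eqVlt; have /negPf -> : (j != i :> nat) := ji.
have {2}-> : row_mix x y i = row_set (row_mix x y i) i (x ord0 i).
  by rewrite -{1}(row_set_id (row_mix x y i) i) !mxE ltnn.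
exact: multilin_row_setB.
Qed.

Lemma multilin_telescope a x y :
  multilin a y - multilin a x = \sum_i (y ord0 i - x ord0 i) * dmultilin a i (row_mix x y i).
Proof.
rewrite -{1}(row_mixn x y) -{2}(row_mix0 x y).
rewrite -(telescope_sumr (fun k => multilin a (row_mix x y k))) // big_mkord.
by apply: eq_bigr => i _; rewrite multilin_row_mixS.
Qed.

Lemma multilin_lipschitz a M x y :
  (forall b, `|a b| <= M) -> in_cube x -> in_cube y ->
  `|multilin a y - multilin a x| <= M * \sum_i `|y ord0 i - x ord0 i|.
Proof.
move=> a_le x_cube y_cube; rewrite multilin_telescope mulr_sumr.
apply: le_trans (ler_norm_sum _ _ _) _; apply: ler_sum => i _.
rewrite normrM mulrC ler_wpM2r //; apply: norm_dmultilin_le a_le _.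
exact: in_cube_row_mix.
Qed.

Lemma dmultilin_row_mix_dist a M x y i :
  (forall b, `|a b| <= M) -> in_cube x -> in_cube y ->
  `|dmultilin a i (row_mix x y i) - dmultilin a i x| <=
  M * \sum_(j < n | (j < i)%N) `|y ord0 j - x ord0 j|.
Proof.
move=> a_le x_cube y_cube.
have zero_unit : -1 <= (0 : R) <= 1 by lra.
apply: le_trans (multilin_lipschitz (norm_dcoef_le i a_le) _ _) _.
- exact: in_cube_row_set.
- by apply: in_cube_row_set => //; apply: in_cube_row_mix.
have M_ge0 : 0 <= M := le_trans (normr_ge0 _) (a_le [ffun=> false]).
apply: (ler_wpM2l M_ge0); rewrite [in X in _ <= X]big_mkcond /=.
apply: ler_sum => j _; rewrite !mxE.
case: eqP => [->|_]; first by rewrite ltnn subrr normr0.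
by case: ifP; rewrite ?subrr ?normr0.
Qed.

Lemma multilin_descent a M x y :
  (forall b, `|a b| <= M) -> in_cube x -> in_cube y ->
  multilin a y <= multilin a x + \sum_i (y ord0 i - x ord0 i) * dmultilin a i x
                  + M * (n%:R / 2) * \sum_i (y ord0 i - x ord0 i) ^+ 2.
Proof.
move=> a_le x_cube y_cube.
have M_ge0 : 0 <= M := le_trans (normr_ge0 _) (a_le [ffun=> false]).
pose d i := y ord0 i - x ord0 i.
change (multilin a y <= multilin a x + \sum_i d i * dmultilin a i x
                        + M * (n%:R / 2) * \sum_i d i ^+ 2).
have remainder : multilin a y - multilin a x - \sum_i d i * dmultilin a i x =
    \sum_i d i * (dmultilin a i (row_mix x y i) - dmultilin a i x).
  by rewrite multilin_telescope -sumrB; apply: eq_bigr => i _; rewrite /d; ring.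
have : \sum_i d i * (dmultilin a i (row_mix x y i) - dmultilin a i x) <=
       M * \sum_i `|d i| * \sum_(j < n | (j < i)%N) `|d j|.
  rewrite mulr_sumr; apply: ler_sum => i _.
  apply: le_trans (ler_norm _) _; rewrite normrM mulrCA ler_wpM2l //.
  exact: dmultilin_row_mix_dist.
have sqr_abs : \sum_i `|d i| ^+ 2 = \sum_i d i ^+ 2.
  by apply: eq_bigr => i _; rewrite real_normK ?num_real.
have := sum_mul_lower_le (fun i => `|d i|); rewrite /= sqr_abs => /(ler_wpM2l M_ge0).
move: remainder; lra.
Qed.

Lemma multilin_pgd_step a M eta x p :
  (forall b, `|a b| <= M) -> 0 < eta -> eta * (n%:R * M) <= 1 -> in_cube x ->
  is_cube_proj (x - eta *: grad (multilin a) x) p ->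
  multilin a p <= multilin a x - eta / 2 * sqnorm (grad_map eta x p).
Proof.
move=> a_le eta_gt0 eta_le x_cube proj.
pose D := \sum_i (p ord0 i - x ord0 i) ^+ 2.
pose GD := \sum_i (p ord0 i - x ord0 i) * dmultilin a i x.
have D_ge0 : 0 <= D by apply: sumr_ge0 => i _; apply: sqr_ge0.
have GD_le : eta * GD <= - D.
  have := cube_proj_variational proj x_cube; rewrite grad_multilin.
  rewrite (eq_bigr (fun i => - (p ord0 i - x ord0 i) ^+ 2
                            - eta * ((p ord0 i - x ord0 i) * dmultilin a i x))).
    by rewrite sumrB sumrN -mulr_sumr -/D -/GD; lra.
  by move=> i _; rewrite !mxE; ring.
have sqnorm_G : sqnorm (grad_map eta x p) = eta^-1 ^+ 2 * D.
  by rewrite /sqnorm /grad_map mulr_sumr; apply: eq_bigr => i _; rewrite !mxE; ring.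
have := multilin_descent a_le x_cube proj.1.
rewrite -/D -/GD sqnorm_G.
have -> : eta / 2 * (eta^-1 ^+ 2 * D) = eta^-1 * D / 2 by field; rewrite gt_eqF.
have : GD + M * (n%:R / 2) * D <= - (eta^-1 * D / 2).
  rewrite -(ler_pM2l eta_gt0) mulrN !mulrA mulfV ?gt_eqF // mul1r.
  nra.
lra.
Qed.

Lemma multilin_pgd_sum_sqnorm_le a M eta (x : nat -> 'rV[R]_n) :
  (forall b, `|a b| <= M) -> 0 < eta -> eta * (n%:R * M) <= 1 -> in_cube (x 0%N) ->
  (forall t, is_cube_proj (x t - eta *: grad (multilin a) (x t)) (x t.+1)) ->
  forall T, \sum_(t < T) sqnorm (grad_map eta (x t) (x t.+1)) <= 4 * M / eta.
Proof.
move=> a_le eta_gt0 eta_le x0_cube proj.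
have x_cube t : in_cube (x t) by elim: t => // t _; exact: (proj t).1.
have telescope T : eta / 2 * \sum_(t < T) sqnorm (grad_map eta (x t) (x t.+1)) <=
                   multilin a (x 0%N) - multilin a (x T).
  elim: T => [|T IH]; first by rewrite big_ord0 mulr0 subrr.
  have := multilin_pgd_step a_le eta_gt0 eta_le (x_cube T) (proj T).
  rewrite big_ord_recr /= mulrDr; lra.
move=> T; rewrite ler_pdivlMr // mulrC.
have /ler_normlP[? ?] := norm_multilin_le a_le (x_cube 0%N).
have /ler_normlP[? ?] := norm_multilin_le a_le (x_cube T).
have := telescope T; lra.
Qed.

End Multilinear.

Lemma exists_lt_of_bounded_partial_sums (R : archiFieldType) (g : nat -> R) (B eps : R) :
  (forall T, \sum_(t < T) g t <= B) -> 0 < eps ->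
  exists t, t%:R <= B / eps /\ g t < eps.
Proof.
move=> sum_le eps_gt0.
have B_ge0 : 0 <= B by have := sum_le 0%N; rewrite big_ord0.
have /andP[trunc_le lt_trunc] := truncn_itv (divr_ge0 B_ge0 (ltW eps_gt0)).
pose T := (Num.truncn (B / eps)).+1.
have [/existsP[t g_lt]|] := boolP [exists t : 'I_T, g t < eps].
  by exists t; split=> //; apply: le_trans trunc_le; rewrite ler_nat -ltnS.
rewrite negb_exists => /forallP g_ge.
have : T%:R * eps <= B.
  apply: le_trans (sum_le T); rewrite mulr_natl -[T in eps *+ T]card_ord -sumr_const.
  by apply: ler_sum => t _; rewrite leNgt g_ge.
by rewrite -ler_pdivlMr // => /(lt_le_trans lt_trunc); rewrite ltxx.
Qed.

Section ClauseObjective.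
Set Implicit Arguments. Unset Strict Implicit.
Variables (R : realType) (n : nat) (f : seq (clause n)).

Definition Fcoef (b : {ffun 'I_n -> bool}) : R := \sum_(c <- f) clause_val c b.

Lemma Fobj_multilin : Fobj f = multilin Fcoef.
Proof.
apply: funext => x; rewrite /Fobj /FE exchange_big /=.
by apply: eq_bigr => b _; rewrite /Fcoef mulr_suml.
Qed.

Lemma norm_Fcoef_le b : `|Fcoef b| <= (size f)%:R.
Proof.
rewrite /Fcoef; elim: f => [|c g IH]; first by rewrite big_nil normr0.
rewrite big_cons /= -addn1 natrD addrC; apply: le_trans (ler_normD _ _) (lerD IH _).
by rewrite /clause_val /pm1; case: clause_sat; rewrite ?normrN normr1.
Qed.

End ClauseObjective.

Theorem theorem8 (R : realType) :
  exists C : R, 0 < C /\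
  forall (n : nat) (f : seq (clause n)) (x : nat -> 'rV[R]_n) (eps : R),
    (0 < n)%N -> (0 < size f)%N ->
    let m := size f in
    let eta : R := (n%:R * m%:R)^-1 in
    in_cube (x 0%N) ->
    (forall t : nat,
        is_cube_proj (x t - eta *: grad (Fobj f) (x t)) (x t.+1)) ->
    0 < eps ->
    exists t : nat,
      t%:R <= C * n%:R * m%:R ^+ 2 / eps ^+ 2 /\
      norm2 (grad_map eta (x t) (x t.+1)) < eps.
Proof.
exists 4; split; first by rewrite ltr0n.
move=> n f x eps n_gt0 f_gt0 m eta x0_cube proj eps_gt0.
have nm_gt0 : 0 < n%:R * m%:R :> R by rewrite mulr_gt0 ?ltr0n.
have eta_gt0 : 0 < eta by rewrite invr_gt0.
have eta_le : eta * (n%:R * m%:R) <= 1 by rewrite mulVf ?gt_eqF.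
rewrite Fobj_multilin in proj.
have sum_le := multilin_pgd_sum_sqnorm_le (@norm_Fcoef_le R n f) eta_gt0 eta_le x0_cube proj.
have [t [t_le G_lt]] := exists_lt_of_bounded_partial_sums
  (g := fun t => sqnorm (grad_map eta (x t) (x t.+1))) sum_le (exprn_gt0 2 eps_gt0).
exists t; split; last first.
  by rewrite /norm2 -(gtr0_norm eps_gt0) -sqrtr_sqr ltr_sqrt ?exprn_gt0.
suff -> : 4 * n%:R * m%:R ^+ 2 / eps ^+ 2 = 4 * m%:R / eta / eps ^+ 2 by [].
by rewrite /eta invrK; ring.
Qed.
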